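(* Let $k=k(n)$ and $m=m(n)$ be functions of $n$ such that $m\geq n$ and $\liminf_{n\rightarrow\infty} \frac{k^2n}{m\log n}>1$. Then asymptotically almost surely $G(n,m,k)$ contains no connected component of size $s$ with $m/k< s\leq n/2$.
   Context: The uniform random intersection graph $G(n,m,k)$ (for positive integers $k\le m$) is the random graph on a set $V$ of $n$ nodes defined as follows: fix a set $M$ of $m$ colours; to each node $v\in V$ assign a subset $F_v\subseteq M$ of exactly $k$ distinct colours, chosen uniformly at random among all $k$-subsets of $M$, independently for different nodes; distinct nodes $u,v$ are joined by an edge if and only if $F_u\cap F_v\neq\emptyset$. An event holds asymptotically almost surely if its probability tends to $1$ as $n\rightarrow\infty$. Here $\log$ denotes the natural logarithm. *)

From mathcomp Require Import all_boot all_order all_algebra.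
From mathcomp Require Import all_classical all_reals all_analysis.

Set Implicit Arguments.
Unset Strict Implicit.
Unset Printing Implicit Defensive.

Definition assignment (n m : nat) := {ffun 'I_n -> {set 'I_m}}.

Definition valid_assignment (n m k : nat) (F : assignment n m) : bool :=
  [forall v, #|F v| == k].

Definition rig_edge (n m : nat) (F : assignment n m) : rel 'I_n :=
  fun u v => (u != v) && ~~ [disjoint F u & F v].

Definition component (n m : nat) (F : assignment n m) (v : 'I_n) : {set 'I_n} :=
  [set w | connect (rig_edge F) v w].

(* There is a component of size s with m/k < s <= n/2
   (written in nat: m < s*k and 2s <= n, valid since k > 0). *)
Definition has_mid_component (n m k : nat) (F : assignment n m) : bool :=
  [exists v, (m < #|component F v| * k) && (#|component F v|.*2 <= n)].

(* Probability of event E in G(n,m,k): uniform over all valid assignments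
   (independent uniform k-subsets for each node). *)
Definition rig_prob (R : realType) (n m k : nat) (E : pred (assignment n m)) : R :=
  (#|[set F : assignment n m | valid_assignment k F && E F]|%:R /
   #|[set F : assignment n m | valid_assignment k F]|%:R)%R.

(* If some component S has m/k < |S| <= n/2, let A be the set of colours used
   by S: every node of S takes all its colours inside A and every other node
   takes all its colours outside A.  For fixed S and A, with s = |S| and
   x = |A|/m, this has probability at most x^(ks) (1-x)^(k(n-s)).  Splitting
   off the binomial term C(m,|A|) x^|A| (1-x)^(m-|A|) <= 1 and bounding the
   rest by 1 + t <= e^t, the C(m,|A|) choices of A of a given size contribute
   at most e^(-ks/2), and C(n,s) e^(-ks/2) <= e^(-m/4) as soon as k >= 100.
   A union bound over the (n+1)(m+1) possible values of s and |A| gives a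
   failure probability O(1/n).  The liminf hypothesis is only used to force
   k >= 100 eventually, because k^2 n > m ln n >= n ln n. *)

From mathcomp Require Import all_boot all_order all_algebra.
From mathcomp Require Import all_classical all_reals all_analysis.
From mathcomp Require Import zify ring lra.

Set Implicit Arguments.
Unset Strict Implicit.
Unset Printing Implicit Defensive.

Import Order.TTheory GRing.Theory Num.Theory.

Lemma foldr_muln_map (T : finType) (f : T -> nat) :
  foldr muln 1 [seq f x | x : T] = \prod_x f x.
Proof. by rewrite foldrE big_map enumT. Qed.

Lemma sum_set_by_card (T : finType) (P : pred nat) (g : nat -> nat) :
  \sum_(X : {set T} | P #|X|) g #|X| =
  \sum_(i < #|T|.+1 | P i) 'C(#|T|, i) * g i.
Proof.
rewrite (partition_big (fun X : {set T} => inord #|X| : 'I_#|T|.+1)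
   (fun i : 'I_#|T|.+1 => P i)) /=; last first.
  by move=> X PX; rewrite inordK // ltnS max_card.
apply: eq_bigr => i Pi.
rewrite (eq_bigl (fun X : {set T} => #|X| == i)); last first.
  move=> X; apply/andP/eqP.
    by case=> _ /eqP <-; rewrite inordK // ltnS max_card.
  move=> e; rewrite e Pi; split => //.
  by apply/eqP/val_inj; rewrite /= inordK // -e ltnS max_card.
rewrite (eq_bigr (fun _ => g i)); last by move=> X /eqP ->.
rewrite big_const iter_addn_0 mulnC -card_draws.
by congr (_ * _); apply: eq_card => X; rewrite inE.
Qed.

Section SeparatedAssignments.
Variables (n m k : nat).
Implicit Types (F : assignment n m) (S : {set 'I_n}) (A : {set 'I_m}).

Definition separated S A F : bool :=
  [forall v, if v \in S then F v \subset A else F v \subset ~: A].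

Lemma mid_component_separated F : has_mid_component k F ->
  exists S A, [&& m < #|S| * k, #|S|.*2 <= n & separated S A F].
Proof.
case/existsP=> v /andP[mid_lo mid_hi].
set C := component F v.
exists C, (\bigcup_(w in C) F w); rewrite mid_lo mid_hi /=.
apply/forallP=> w; case: ifPn => wC; first exact: finset.bigcup_sup.
apply/fintype.subsetP=> c cw; rewrite inE; apply/negP => /bigcupP[w' w'C cw'].
move: (wC); rewrite inE => /negP; apply.
move: (w'C); rewrite inE => /connect_trans; apply; apply: connect1.
apply/andP; split.
  by apply/eqP => eqw; move: wC; rewrite -eqw w'C.
by apply/negP => /disjointFr/(_ cw'); rewrite cw.
Qed.

Lemma card_valid_assignment :
  #|[set F : assignment n m | valid_assignment k F]| = 'C(m, k) ^ n.
Proof.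
have -> : #|[set F : assignment n m | valid_assignment k F]| =
    #|(family (fun=> mem [set B : {set 'I_m} | #|B| == k])
        : simpl_pred (assignment n m))|.
  apply: eq_card => F; rewrite inE.
  by apply/forallP/familyP => h v; have := h v; rewrite inE.
by rewrite card_family foldr_muln_map card_draws card_ord prod_nat_const card_ord.
Qed.

Lemma card_separated S A :
  #|[set F : assignment n m | valid_assignment k F && separated S A F]| =
  'C(#|A|, k) ^ #|S| * 'C(m - #|A|, k) ^ (n - #|S|).
Proof.
pose D v := [set B : {set 'I_m} |
   (if v \in S then B \subset A else B \subset ~: A) & #|B| == k].
have -> : #|[set F : assignment n m | valid_assignment k F && separated S A F]| =
    #|(family (fun v => mem (D v)) : simpl_pred (assignment n m))|.
  apply: eq_card => F; rewrite inE; apply/andP/familyP.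
    by move=> [/forallP hv /forallP hs] v; rewrite /D inE hv andbT; apply: hs.
  by move=> h; split; apply/forallP => v; have := h v; rewrite /D inE; case/andP.
have cardAC : #|~: A| = m - #|A|.
  by rewrite -[X in _ = X - _](card_ord m) -(cardsC A) addKn.
rewrite card_family foldr_muln_map.
rewrite (eq_bigr (fun v => if v \in S then 'C(#|A|, k) else 'C(m - #|A|, k)));
  last first.
  move=> v _; rewrite /D -cardAC; case: (v \in S);
    by rewrite -cards_draws; apply: eq_card => B; rewrite !inE.
rewrite (bigID (mem S)) /= (eq_bigr (fun _ => 'C(#|A|, k))); last by move=> v ->.
rewrite [X in _ * X](eq_bigr (fun _ => 'C(m - #|A|, k))); last first.
  by move=> v /negbTE ->.
rewrite !prod_nat_const; congr (_ ^ _ * _ ^ _).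
by rewrite -[X in _ = X - _](card_ord n) -(cardC (mem S)) addKn; apply: eq_card.
Qed.

Lemma card_mid_component_le_sum_separated :
  #|[set F : assignment n m | valid_assignment k F && has_mid_component k F]| <=
  \sum_(S : {set 'I_n} | (m < #|S| * k) && (#|S|.*2 <= n))
     \sum_(A : {set 'I_m})
        #|[set F : assignment n m | valid_assignment k F && separated S A F]|.
Proof.
rewrite -sum1_card.
apply: (@leq_trans (\sum_(F in [set F : assignment n m |
                         valid_assignment k F && has_mid_component k F])
    \sum_(S : {set 'I_n} | (m < #|S| * k) && (#|S|.*2 <= n))
       \sum_(A : {set 'I_m}) (valid_assignment k F && separated S A F : nat))).
  apply: leq_sum => F; rewrite inE => /andP[vF /mid_component_separated].
  case=> S [A /and3P[mid_lo mid_hi sepF]].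
  rewrite (bigD1 S) ?mid_lo ?mid_hi //= (bigD1 A) //= vF sepF.
  by rewrite -addnA leq_addr.
rewrite exchange_big /=; apply: leq_sum => S _.
rewrite exchange_big /=; apply: leq_sum => A _.
rewrite -sum1_card big_mkcond [X in _ <= X]big_mkcond /=.
apply: leq_sum => F _; rewrite !inE.
by case: (valid_assignment k F); case: (has_mid_component k F); case: (separated S A F).
Qed.

Lemma card_mid_component_le :
  #|[set F : assignment n m | valid_assignment k F && has_mid_component k F]| <=
  \sum_(s < n.+1 | (m < s * k) && (s.*2 <= n))
     'C(n, s) * \sum_(u < m.+1) 'C(m, u) * ('C(u, k) ^ s * 'C(m - u, k) ^ (n - s)).
Proof.
apply: leq_trans card_mid_component_le_sum_separated (eq_leq _).
under eq_bigr => S _ do under eq_bigr => A _ do rewrite card_separated.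
have := sum_set_by_card 'I_n (fun s => (m < s * k) && (s.*2 <= n))
   (fun s => \sum_(A : {set 'I_m}) 'C(#|A|, k) ^ s * 'C(m - #|A|, k) ^ (n - s)).
rewrite card_ord /= => ->; apply: eq_bigr => s _; congr (_ * _).
have := sum_set_by_card 'I_m (fun _ => true)
  (fun u => 'C(u, k) ^ s * 'C(m - u, k) ^ (n - s)).
by rewrite card_ord /= => ->.
Qed.

Lemma card_valid_split :
  #|[set F : assignment n m | valid_assignment k F && ~~ has_mid_component k F]| +
  #|[set F : assignment n m | valid_assignment k F && has_mid_component k F]| =
  #|[set F : assignment n m | valid_assignment k F]|.
Proof.
rewrite -(cardsID [set F | has_mid_component k F]
                  [set F : assignment n m | valid_assignment k F]).
by rewrite addnC; congr (_ + _); apply: eq_card => F; rewrite !inE andbC.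
Qed.

End SeparatedAssignments.

Lemma ffact_leq_expn a s : a ^_ s <= a ^ s.
Proof.
elim: s => [|s IH]; first by rewrite ffactn0.
by rewrite ffactnSr expnS mulnC leq_mul ?leq_subr.
Qed.

Lemma ffact_ratio_le a m k : a <= m -> a ^_ k * m ^ k <= m ^_ k * a ^ k.
Proof.
move=> am; elim: k => [|k IH]; first by rewrite !ffactn0 !expn0.
rewrite !ffactnSr !expnS.
have step : (a - k) * m <= (m - k) * a by nia.
by have := leq_mul IH step; nia.
Qed.

Lemma bin_ratio_le a m k : a <= m -> 'C(a, k) * m ^ k <= 'C(m, k) * a ^ k.
Proof.
move=> am; rewrite -(leq_pmul2r (fact_gt0 k)) mulnAC bin_ffact.
by rewrite mulnAC bin_ffact ffact_ratio_le.
Qed.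

Section RealInequalities.
Variable R : realType.
Local Open Scope ring_scope.

Lemma bernstein_term_le1 (m u : nat) (x : R) : (u <= m)%N -> 0 <= x <= 1 ->
  'C(m, u)%:R * x ^+ u * (1 - x) ^+ (m - u) <= 1.
Proof.
move=> um /andP[x0 x1].
have := exprDn (1 - x) x m; rewrite subrK expr1n => binomial_sum.
rewrite [leRHS]binomial_sum (bigD1 (Ordinal (um : (u < m.+1)%N))) //=.
have -> : 'C(m, u)%:R * x ^+ u * (1 - x) ^+ (m - u) =
    (1 - x) ^+ (m - u) * x ^+ u *+ 'C(m, u) by rewrite -mulr_natl; ring.
rewrite lerDl sumr_ge0 // => i _.
by rewrite mulrn_wge0 // mulr_ge0 // exprn_ge0 // subr_ge0.
Qed.

Lemma exprn_le_expR (x : R) (a : nat) : 0 <= x -> x ^+ a <= expR (a%:R * (x - 1)).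
Proof.
move=> x0; rewrite expRM_natl; apply: lerXn2r; rewrite ?nnegrE ?expR_ge0 //.
by have := expR_ge1Dx (x - 1); rewrite addrC subrK.
Qed.

Lemma expn_div_fact_le_expR (s : nat) : s%:R ^+ s / s`!%:R <= expR s%:R :> R.
Proof.
case: s => [|s]; first by rewrite expr0 fact0 divr1 expR0.
have := @expR_ge1Dxn R s.+1%:R s (ler0n _ _).
by apply: le_trans; rewrite lerDr.
Qed.

Lemma bin_le_expn_div_fact (n s : nat) : 'C(n, s)%:R <= n%:R ^+ s / s`!%:R :> R.
Proof.
rewrite ler_pdivlMr ?ltr0n ?fact_gt0 // -natrM bin_ffact -natrX ler_nat.
exact: ffact_leq_expn.
Qed.

Lemma bin_ratio_ler (a m k : nat) : (0 < m)%N -> (a <= m)%N ->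
  'C(a, k)%:R <= 'C(m, k)%:R * (a%:R / m%:R) ^+ k :> R.
Proof.
move=> m0 am; rewrite expr_div_n mulrA ler_pdivlMr ?exprn_gt0 ?ltr0n //.
by rewrite -!natrX -!natrM ler_nat bin_ratio_le.
Qed.

(* Uses k >= 100 in the form ln k <= k/4 - 1 (from e^y >= 1 + y + y^2/2). *)
Lemma mul_expR_half_le_expR_quarter (k : nat) : (100 <= k)%N ->
  k%:R * expR 1 * expR (- (k%:R / 2)) <= expR (- (k%:R / 4)) :> R.
Proof.
move=> k100.
have kR : 100 <= k%:R :> R by rewrite (ler_nat R 100 k).
set y : R := k%:R / 4 - 1.
have y0 : 0 <= y by rewrite /y; lra.
have k_le_expR : k%:R <= expR y.
  apply: le_trans (@expR_ge1Dxn R y 1 y0).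
  by rewrite /= expr2 /y (_ : 2`!%:R = 2 :> R) //; nra.
have -> : expR (- (k%:R / 4)) = expR y * (expR 1 * expR (- (k%:R / 2))).
  by rewrite -!expRD /y; congr expR; lra.
by rewrite -mulrA ler_pM2r ?mulr_gt0 ?expR_gt0.
Qed.

Lemma bin_mul_expR_le (n m k s : nat) :
  (100 <= k)%N -> (n <= m)%N -> (m < s * k)%N ->
  'C(n, s)%:R * expR (- ((k * s)%:R / 2)) <= expR (- (m%:R / 4)) :> R.
Proof.
move=> k100 nm msk.
have bin_le : 'C(n, s)%:R <= k%:R ^+ s * expR s%:R :> R.
  apply: (le_trans (bin_le_expn_div_fact n s)).
  apply: (@le_trans _ _ ((k * s)%:R ^+ s / s`!%:R)).
    rewrite ler_pM2r ?invr_gt0 ?ltr0n ?fact_gt0 //.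
    by rewrite lerXn2r ?nnegrE ?ler0n // ler_nat mulnC; lia.
  by rewrite natrM exprMn -mulrA ler_wpM2l ?exprn_ge0 ?ler0n ?expn_div_fact_le_expR.
apply: (le_trans (ler_wpM2r (expR_ge0 _) bin_le)).
have -> : k%:R ^+ s * expR s%:R * expR (- ((k * s)%:R / 2)) =
    (k%:R * expR 1 * expR (- (k%:R / 2))) ^+ s :> R.
  rewrite !exprMn -!expRM_natl mulr1 natrM; congr (_ * _ * expR _); lra.
apply: (le_trans (lerXn2r s _ _ (mul_expR_half_le_expR_quarter k100)));
  rewrite ?nnegrE ?mulr_ge0 ?expR_ge0 //.
rewrite -expRM_natl ler_expR.
have : m%:R <= (s * k)%:R :> R by rewrite ler_nat ltnW.
by rewrite natrM; lra.
Qed.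

Lemma bin_pow_ler (n m k s u : nat) : (0 < m)%N -> (s <= n)%N -> (u <= m)%N ->
  ('C(u, k) ^ s * 'C(m - u, k) ^ (n - s))%:R <=
  'C(m, k)%:R ^+ n *
    ((u%:R / m%:R) ^+ (k * s) * (1 - u%:R / m%:R) ^+ (k * (n - s))) :> R.
Proof.
move=> m0 sn um.
have mR : 0 < m%:R :> R by rewrite ltr0n.
set x : R := u%:R / m%:R.
have x0 : 0 <= x by rewrite divr_ge0 ?ler0n.
have x1 : x <= 1 by rewrite ler_pdivrMr // mul1r ler_nat.
have cu : 'C(u, k)%:R <= 'C(m, k)%:R * x ^+ k :> R by apply: bin_ratio_ler.
have cmu : 'C(m - u, k)%:R <= 'C(m, k)%:R * (1 - x) ^+ k :> R.
  have -> : 1 - x = (m - u)%:R / m%:R by rewrite natrB // /x; field; rewrite gt_eqF.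
  by apply: bin_ratio_ler => //; rewrite leq_subr.
rewrite natrM !natrX.
apply: (le_trans (ler_pM _ _ (lerXn2r s _ _ cu) (lerXn2r (n - s) _ _ cmu)));
  rewrite ?nnegrE ?ler0n ?mulr_ge0 ?exprn_ge0 ?subr_ge0 //.
by rewrite !exprMn -!exprM mulrACA -exprD subnKC.
Qed.

(* Write ks = u + a and k(n-s) = (m-u) + b; the binomial term of u is at most 1
   and x^a (1-x)^b <= e^(-a(1-x) - bx), which is at most e^(-ks/2) because
   2s <= n and m <= ks. *)
Lemma bin_bernstein_le_expR (n m k s u : nat) :
  (m < s * k)%N -> (s.*2 <= n)%N -> (0 < m)%N -> (u <= m)%N ->
  'C(m, u)%:R *
    ((u%:R / m%:R) ^+ (k * s) * (1 - u%:R / m%:R) ^+ (k * (n - s)))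
  <= expR (- ((k * s)%:R / 2)) :> R.
Proof.
move=> msk sn m0 um.
have mR : 0 < m%:R :> R by rewrite ltr0n.
set x : R := u%:R / m%:R.
have x0 : 0 <= x by rewrite divr_ge0 ?ler0n.
have x1 : x <= 1 by rewrite ler_pdivrMr // mul1r ler_nat.
have ux : u%:R = x * m%:R :> R by rewrite divfK // gt_eqF.
set a := (k * s - u)%N; set b := (k * (n - s) - (m - u))%N.
have -> : (k * s = u + a)%N by rewrite /a; lia.
have -> : (k * (n - s) = (m - u) + b)%N by rewrite /b; nia.
rewrite !exprD.
have -> : 'C(m, u)%:R * (x ^+ u * x ^+ a * ((1 - x) ^+ (m - u) * (1 - x) ^+ b)) =
    ('C(m, u)%:R * x ^+ u * (1 - x) ^+ (m - u)) * (x ^+ a * (1 - x) ^+ b) by ring.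
apply: (le_trans (ler_wpM2r _ (bernstein_term_le1 um _)));
  rewrite ?mulr_ge0 ?exprn_ge0 ?subr_ge0 ?x0 ?x1 // mul1r.
apply: (le_trans (ler_pM _ _ (exprn_le_expR a x0) (exprn_le_expR b (x := 1 - x) _)));
  rewrite ?exprn_ge0 ?subr_ge0 // -expRD ler_expR.
have ha : a%:R = (k * s)%:R - u%:R :> R by rewrite natrB //; lia.
have hb : b%:R = (k * (n - s))%:R - m%:R + u%:R :> R.
  by rewrite /b natrB ?natrB //; try (lra || nia).
rewrite ha hb ux !natrM natrB; last lia.
have hs : s%:R * 2 <= n%:R :> R by rewrite -natrM ler_nat muln2.
have hm : m%:R <= k%:R * s%:R :> R by rewrite -natrM ler_nat mulnC ltnW.
have h1 : 0 <= k%:R * x * (n%:R - s%:R * 2) :> R.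
  by rewrite mulr_ge0 ?mulr_ge0 ?ler0n ?subr_ge0.
have h2 : 0 <= m%:R * ((2 * x - 1) * (2 * x - 1)) :> R.
  by rewrite mulr_ge0 ?ler0n // -expr2 sqr_ge0.
nra.
Qed.

Lemma mid_term_le (n m k s u : nat) :
  (100 <= k)%N -> (n <= m)%N -> (m < s * k)%N -> (s.*2 <= n)%N -> (u <= m)%N ->
  ('C(n, s) * ('C(m, u) * ('C(u, k) ^ s * 'C(m - u, k) ^ (n - s))))%:R
    <= expR (- (m%:R / 4)) * ('C(m, k) ^ n)%:R :> R.
Proof.
move=> k100 nm msk sn um.
have m0 : (0 < m)%N.
  by case: s msk sn nm => [|s]; [rewrite mul0n | rewrite -addnn addSn; lia].
set P : R := (u%:R / m%:R) ^+ (k * s) * (1 - u%:R / m%:R) ^+ (k * (n - s)).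
apply: (@le_trans _ _ ('C(n, s)%:R * ('C(m, u)%:R * ('C(m, k)%:R ^+ n * P)))).
  rewrite 2!natrM ler_wpM2l ?ler0n // ler_wpM2l ?ler0n //.
  by apply: bin_pow_ler => //; apply: leq_trans sn; rewrite -addnn leq_addr.
have -> : 'C(n, s)%:R * ('C(m, u)%:R * ('C(m, k)%:R ^+ n * P)) =
    'C(m, k)%:R ^+ n * ('C(n, s)%:R * ('C(m, u)%:R * P)) :> R by ring.
rewrite [X in _ <= X]mulrC natrX ler_wpM2l ?exprn_ge0 ?ler0n //.
apply: le_trans (bin_mul_expR_le k100 nm msk).
by rewrite ler_wpM2l ?ler0n //; exact: bin_bernstein_le_expR.
Qed.

End RealInequalities.

Section ProbabilityBound.
Variable R : realType.
Local Open Scope ring_scope.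

Lemma card_mid_component_ler (n m k : nat) : (100 <= k)%N -> (n <= m)%N ->
  #|[set F : assignment n m | valid_assignment k F && has_mid_component k F]|%:R
   <= (n.+1 * m.+1)%:R * (expR (- (m%:R / 4)) * ('C(m, k) ^ n)%:R) :> R.
Proof.
move=> k100 nm.
have := card_mid_component_le n m k; rewrite -(ler_nat R) => /le_trans; apply.
set E : R := expR (- (m%:R / 4)) * ('C(m, k) ^ n)%:R.
have E0 : 0 <= E by rewrite mulr_ge0 ?expR_ge0 ?ler0n.
apply: (@le_trans _ _ (\sum_(s < n.+1) m.+1%:R * E)); last first.
  by rewrite sumr_const card_ord -[_ *+ n.+1]mulr_natl natrM mulrA.
rewrite natr_sum.
rewrite [X in _ <= X](bigID (fun s : 'I_n.+1 => (m < s * k) && (s.*2 <= n))%N) /=.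
rewrite -[X in X <= _]addr0 lerD //; last by rewrite sumr_ge0 // => s _; rewrite mulr_ge0.
apply: ler_sum => s /andP[msk sn].
rewrite natrM natr_sum big_distrr /=.
apply: (@le_trans _ _ (\sum_(u < m.+1) E)); last by rewrite sumr_const card_ord mulr_natl.
by apply: ler_sum => u _; rewrite -natrM mid_term_le // -ltnS.
Qed.

(* (n+1)(m+1) n <= 4 m^3 and m^3 <= 384 e^(m/4), since e^y >= y^3/6. *)
Lemma mul_expR_quarter_le (n m : nat) : (1 <= n)%N -> (n <= m)%N ->
  (n.+1 * m.+1)%:R * expR (- (m%:R / 4)) <= 1536 / n%:R :> R.
Proof.
move=> n1 nm.
have N1 : 1 <= n%:R :> R by rewrite (ler_nat R 1 n).
have NM : n%:R <= m%:R :> R by rewrite ler_nat.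
set x : R := expR (m%:R / 4).
have x0 : 0 < x by exact: expR_gt0.
have cube_le : m%:R ^+ 3 <= 384 * x :> R.
  suff : m%:R ^+ 3 / 384 <= x :> R by lra.
  apply: le_trans (@expR_ge1Dxn R (m%:R / 4) 2 (divr_ge0 (ler0n _ _) (ler0n _ _))).
  rewrite (_ : 3`!%:R = 6 :> R) // ler_wpDl // le_eqVlt; apply/orP; left.
  by apply/eqP; field.
have n0 : 0 < n%:R :> R by lra.
rewrite expRN -/x natrM ler_pdivlMr // mulrAC ler_pdivrMr //.
rewrite -[n.+1]addn1 -[m.+1]addn1 !natrD.
have M1 : 1 <= m%:R :> R by lra.
set M : R := m%:R in cube_le M1 NM *; set N : R := n%:R in N1 NM n0 *.
apply: (@le_trans _ _ ((M + 1) * (M + 1) * M)).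
  by apply: ler_pM; [nra | lra | apply: ler_pM; lra | lra].
apply: (@le_trans _ _ (4 * M ^+ 3)); last lra.
have sq_le : (M + 1) * (M + 1) <= 4 * (M * M) by nra.
rewrite !exprS expr0 mulr1; nra.
Qed.

Lemma rig_prob_mid_component_le (n m k : nat) :
  (100 <= k)%N -> (k <= m)%N -> (1 <= n)%N -> (n <= m)%N ->
  `|1 - rig_prob R k (fun F : assignment n m => ~~ has_mid_component k F)|
    <= 1536 / n%:R.
Proof.
move=> k100 km n1 nm.
rewrite /rig_prob; have split_card := card_valid_split n m k.
rewrite card_valid_assignment in split_card *.
set G := #|[set F : assignment n m | valid_assignment k F && ~~ has_mid_component k F]|.
set B := #|[set F : assignment n m | valid_assignment k F && has_mid_component k F]|.
have V0 : 0 < ('C(m, k) ^ n)%:R :> R by rewrite ltr0n expn_gt0 bin_gt0 km.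
have -> : 1 - G%:R / ('C(m, k) ^ n)%:R = B%:R / ('C(m, k) ^ n)%:R :> R.
  by rewrite -split_card natrD; field; rewrite -natrD split_card gt_eqF.
rewrite ger0_norm ?divr_ge0 ?ler0n // ler_pdivrMr //.
apply: (le_trans (card_mid_component_ler k100 nm)).
by rewrite mulrA ler_wpM2r ?ler0n ?mul_expR_quarter_le.
Qed.

End ProbabilityBound.

Section EventualBounds.
Variable R : realType.
Local Open Scope ring_scope.

Lemma limn_einf_gt_eventually (c : R) (u : nat -> R) :
  (c%:E < limn_einf (fun n => (u n)%:E))%E ->
  exists N, forall n, (N <= n)%N -> c < u n.
Proof.
rewrite limn_einf_lim (cvg_lim _ (@cvg_einfs_sup R (fun n => (u n)%:E)));
  last exact: ereal_hausdorff.
move=> /ereal_sup_gt[_ [N _ <-] cN]; exists N => n Nn.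
have : (einfs (fun n => (u n)%:E) N <= (u n)%:E)%E.
  by apply: ereal_inf_lbound; exists n.
by move=> /(lt_le_trans cN); rewrite lte_fin.
Qed.

Lemma ln_nat_ge_eventually (c : R) :
  exists N, forall n, (N <= n)%N -> c <= ln (n%:R : R).
Proof.
have := archi_boundP (expR_ge0 c); set N := Num.Def.archi_bound _ => hN.
exists N => n Nn.
have expc_lt : expR c < n%:R by apply: lt_le_trans hN _; rewrite ler_nat.
rewrite -[X in X <= _](expRK c) ler_ln ?posrE ?expR_gt0 ?ltW //.
exact: lt_trans (expR_gt0 c) expc_lt.
Qed.

Lemma ratio_gt1_k_ge100 (k n m : nat) : (n <= m)%N ->
  1 < (k ^ 2 * n)%:R / (m%:R * ln (n%:R : R)) -> 10000 <= ln (n%:R : R) ->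
  (100 <= k)%N.
Proof.
move=> nm ratio_gt1 ln_ge.
set l := ln (n%:R : R) in ratio_gt1 ln_ge.
have [m0|m_gt0] := posnP m.
  by move: ratio_gt1; rewrite m0 mul0r invr0 mulr0 ltr10.
have mR : 0 < m%:R :> R by rewrite ltr0n.
move: ratio_gt1; rewrite ltr_pdivlMr ?mulr_gt0 //; last by lra.
rewrite mul1r natrM natrX expr2 => ratio_gt1.
rewrite leqNgt; apply/negP => k_lt.
have kR : k%:R <= 99 :> R by rewrite (ler_nat R k 99) -ltnS.
have nl_le : n%:R * l <= m%:R * l :> R by rewrite ler_wpM2r ?ler_nat //; lra.
have k0 : 0 <= k%:R :> R := ler0n _ _.
have n0 : 0 <= n%:R :> R := ler0n _ _.
have k2 : k%:R * k%:R <= 9801 :> R by nra.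
nra.
Qed.

End EventualBounds.

Import numFieldNormedType.Exports.
Local Open Scope classical_set_scope.

Theorem lemma8 (R : realType) (k m : nat -> nat)
  (hk : forall n, (0 < k n)%N) (hkm : forall n, (k n <= m n)%N)
  (hm : forall n, (n <= m n)%N)
  (hlim : (1%:E < limn_einf (fun n : nat =>
      ((((k n) ^ 2 * n)%:R / ((m n)%:R * ln (n%:R : R)))%R)%:E))%E) :
  (fun n : nat => rig_prob R (k n)
      (fun F : assignment n (m n) => ~~ has_mid_component (k n) F))
    @ \oo --> (1%R : R).
Proof.
have [N0 ratio_gt1] := limn_einf_gt_eventually hlim.
have [N1 ln_ge] := ln_nat_ge_eventually (10000 : R).
apply/cvgrPdist_le => eps eps0.
have := archi_boundP (divr_ge0 (ler0n R 1536) (ltW eps0)).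
set N2 := Num.Def.archi_bound _ => hN2.
exists (maxn (maxn N0 N1) N2.+1) => // n /= hn.
have k100 : (100 <= k n)%N.
  by apply: (ratio_gt1_k_ge100 (hm n)); [apply: ratio_gt1 | apply: ln_ge]; lia.
apply: (le_trans (rig_prob_mid_component_le R k100 (hkm n) _ (hm n))); first lia.
have n0 : (0 < n%:R :> R)%R by rewrite ltr0n; lia.
have : (1536 / eps < n%:R)%R by apply: lt_le_trans hN2 _; rewrite ler_nat; lia.
by rewrite ler_pdivrMr // ltr_pdivrMr //; lra.
Qed.
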